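(* Let $r\ge2$ and let $\tau$ be the substitution on $\{1,2,\dots,r\}$ defined by $\tau(i)=i(i+1)\cdots r\,1\,2\cdots(i-1)$ for $1\le i\le r$ (so $\tau(1)=12\cdots r$, $\tau(2)=23\cdots r1$, $\dots$, $\tau(r)=r12\cdots(r-1)$). For $1\le i\le r$ let $x^{(i)}$ be the fixed point of $\tau$ beginning with the letter $i$, and let $X$ be the one-sided subshift generated by $\tau$. Then each $x^{(i)}$ is distal in $X$: the only point of $X$ proximal to $x^{(i)}$ is $x^{(i)}$ itself. In particular each of the two fixed points of the Thue–Morse substitution ($r=2$) is distal.
   Context: $X$ is the shift-orbit closure in $\{1,\dots,r\}^{\mathbb N}$ of a fixed point of the (primitive) substitution $\tau$, with $T$ the shift map; it does not depend on the choice of fixed point. Two points $x,y\in X$ are proximal if for every $N>0$ there exists $n\in\mathbb N$ with $x_nx_{n+1}\cdots x_{n+N}=y_ny_{n+1}\cdots y_{n+N}$. A point $x\in X$ is distal if the only point of $X$ proximal to $x$ is $x$. *)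

From mathcomp Require Import all_boot.
Set Implicit Arguments. Unset Strict Implicit. Unset Printing Implicit Defensive.

Definition tau (r i : nat) : seq nat := [seq (i.-1 + k) %% r + 1 | k <- iota 0 r].

(* tau applied to an infinite sequence x = x_0 x_1 ...: the concatenation
   tau(x_0) tau(x_1) ...; since every tau(i) has length r, position m of the
   result is letter (m mod r) of tau(x_(m div r)). *)
Definition subst_seq (r : nat) (x : nat -> nat) : nat -> nat :=
  fun m => nth 0 (tau r (x (m %/ r))) (m %% r).

Definition is_fixed_point (r : nat) (x : nat -> nat) : Prop :=
  (forall n, 1 <= x n <= r) /\ subst_seq r x = x.

Definition in_orbit_closure (u y : nat -> nat) : Prop :=
  forall N, exists n, forall k, k <= N -> y k = u (n + k).

Definition proximal (x y : nat -> nat) : Prop :=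
  forall N, 0 < N -> exists n, forall k, k <= N -> x (n + k) = y (n + k).

Definition distal_in (X : (nat -> nat) -> Prop) (x : nat -> nat) : Prop :=
  forall y, X y -> proximal x y -> y = x.

From mathcomp Require Import all_boot.
From Stdlib Require Import FunctionalExtensionality.
From mathcomp Require Import zify.

Set Implicit Arguments. Unset Strict Implicit. Unset Printing Implicit Defensive.

(* Shifting letters down by one, a sequence x is a fixed point of tau iff
   X := x - 1 obeys the digit rule  X m = X (m / r) + (m mod r)  (mod r), i.e.
   X m = X 0 + (sum of the base-r digits of m) mod r.  Existence of the fixed
   point starting with i is read off this formula.

   For distality we study an arbitrary X obeying the digit rule:
   - local steps: inside an r-block X increases by 1, and across a block
     boundary not followed by a boundary of the next level it increases by 2;
   - recognizability: if X agrees on two windows of length [window r L], the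
     window positions are congruent modulo r^L;
   - block additivity: X (q r^L + k) + X 0 = X q + X k mod r for k < r^L.
   If Y lies in the orbit closure of X and is proximal to it, recognizability
   forces the occurrences of long prefixes of Y in X to start at multiples of
   r^L; block additivity then gives Y k - Y 0 = X k - X 0 mod r for all k, and
   one position where Y and X agree yields Y = X. *)

Lemma nth_tau r a k : k < r -> nth 0 (tau r a) k = (a.-1 + k) %% r + 1.
Proof. by move=> hk; rewrite /tau (nth_map 0) ?size_iota // nth_iota. Qed.

Lemma divmod_small r A b : 0 < r -> b < r ->
  (A * r + b) %/ r = A /\ (A * r + b) %% r = b.
Proof. by move=> r0 hb; rewrite divnMDl // divn_small // addn0 modnMDl modn_small. Qed.

Definition digit_rule (r : nat) (X : nat -> nat) : Prop :=
  forall m, X m = (X (m %/ r) + m %% r) %% r.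

Lemma fixed_point_digit_rule r x :
  is_fixed_point r x -> digit_rule r (fun m => (x m).-1).
Proof.
move=> [Hrange Hfix] m; have r0 : 0 < r by have := Hrange 0; lia.
by rewrite -{1}Hfix /subst_seq nth_tau ?ltn_pmod // addn1.
Qed.

Fixpoint digit_sum_upto (r fuel m : nat) : nat :=
  if fuel is f.+1 then m %% r + digit_sum_upto r f (m %/ r) else 0.

(* Fuel m suffices, since m has at most m nonzero digits. *)
Definition digit_sum (r m : nat) : nat := digit_sum_upto r m m.

Lemma digit_sum_upto0 r f : digit_sum_upto r f 0 = 0.
Proof. by elim: f => //= f IH; rewrite mod0n div0n IH. Qed.

Lemma digit_sum_upto_enough r : 2 <= r ->
  forall f g m, m <= f -> m <= g -> digit_sum_upto r f m = digit_sum_upto r g m.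
Proof.
move=> hr; elim=> [|f IH] g m hf hg.
  by rewrite (_ : m = 0) ?digit_sum_upto0 //; lia.
case: g hg => [|g] hg; first by rewrite (_ : m = 0) ?digit_sum_upto0 //; lia.
rewrite /=; congr (_ + _); case: m hf hg => [|m] hf hg.
  by rewrite div0n !digit_sum_upto0.
have := ltn_Pdiv hr (ltn0Sn m); rewrite ltnS => h.
by apply: IH; apply: leq_trans h _.
Qed.

Lemma digit_sum_rec r : 2 <= r ->
  forall m, digit_sum r m = m %% r + digit_sum r (m %/ r).
Proof.
move=> hr m; rewrite /digit_sum.
rewrite (digit_sum_upto_enough hr (g := m.+1) (leqnn m) (leqnSn m)) /=.
congr (_ + _); apply: digit_sum_upto_enough => //; exact: leq_div.
Qed.

Lemma fixed_point_exists r i : 2 <= r -> 1 <= i <= r ->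
  exists x, is_fixed_point r x /\ x 0 = i.
Proof.
move=> hr hi; have r0 : 0 < r by lia.
exists (fun m => (i.-1 + digit_sum r m) %% r + 1); split; last first.
  by rewrite /= addn0 modn_small ?addn1 ?prednK //; lia.
split=> [n|]; first by rewrite addn1 ltn_pmod.
apply: functional_extensionality => m.
rewrite /subst_seq nth_tau ?ltn_pmod // !addn1 /= modnDml (digit_sum_rec hr m).
by rewrite [m %% r + _]addnC addnA.
Qed.

(* Window length sufficient to recognize positions modulo r^L: 2r letters
   at level one, plus r times the window of the level below. *)
Fixpoint window (r L : nat) : nat :=
  if L is L'.+1 then r * window r L' + 2 * r else 0.

Section DigitRule.

Variables (r : nat) (X : nat -> nat).
Hypothesis hr : 2 <= r.
Hypothesis HX : digit_rule r X.

Let r0 : 0 < r. Proof. by apply: leq_trans hr. Qed.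

Lemma digit_rule_lt m : X m < r.
Proof. by rewrite HX ltn_pmod. Qed.

Lemma digit_rule_mul k : X (k * r) = X k.
Proof.
have [d m] := divmod_small k r0 r0.
by rewrite HX -[k * r]addn0 d m addn0 modn_small ?digit_rule_lt.
Qed.

Lemma digit_rule_step_inner w : w %% r != r.-1 -> X w.+1 = (X w + 1) %% r.
Proof.
move=> hw.
have hlt : (w %% r).+1 < r by move: (ltn_pmod w r0) hw; set t := w %% r => h1 /eqP; lia.
have e : w.+1 = w %/ r * r + (w %% r).+1 by rewrite addnS -divn_eq.
have [d1 m1] := divmod_small (w %/ r) r0 hlt.
by rewrite HX e d1 m1 [X w]HX modnDml -addnA addn1.
Qed.

Lemma digit_rule_step_boundary u : u %% r = r.-1 -> (u %/ r) %% r != r.-1 ->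
  X u.+1 = (X u + 2) %% r.
Proof.
move=> hu hv.
have e : u.+1 = (u %/ r).+1 * r + 0.
  by rewrite addn0 mulSn addnC {1}(divn_eq u r) hu -addnS prednK.
have [d1 m1] := divmod_small (u %/ r).+1 r0 r0.
rewrite HX e d1 m1 addn0 modn_small ?digit_rule_lt // (digit_rule_step_inner hv).
rewrite [X u]HX hu modnDml -addnA addn2 prednK // -addSnnS.
by rewrite addn0 addnS -addSn modnDr.
Qed.

(* Two agreeing windows straddling a level-one-only block boundary of the
   second one are aligned modulo r: otherwise the increments 1 and 2 differ. *)
Lemma align_at_boundary P p j :
  (forall j', j' <= j.+1 -> X (P + j') = X (p + j')) ->
  (p + j) %% r = r.-1 -> ((p + j) %/ r) %% r != r.-1 -> P = p %[mod r].
Proof.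
move=> H h1 h2.
case: (eqVneq ((P + j) %% r) r.-1) => hP.
  by apply/eqP; rewrite -(eqn_modDr j); apply/eqP; rewrite hP h1.
have e1 := H j.+1 (leqnn _).
rewrite !addnS (digit_rule_step_inner hP) (digit_rule_step_boundary h1 h2)
  (H j (leqnSn _)) in e1.
move/eqP: e1; rewrite eqn_modDl (modn_small hr) => /eqP.
have [r_gt2|<-] : 2 < r \/ 2 = r by lia.
  by rewrite modn_small.
by rewrite modnn.
Qed.

(* Recognizability modulo r: windows of length 2r always contain such a
   boundary. *)
Lemma recognize_mod_r P p :
  (forall j, j <= 2 * r -> X (P + j) = X (p + j)) -> P = p %[mod r].
Proof.
move=> H.
set j0 := r.-1 - p %% r.
have hp : p %% r <= r.-1 by rewrite -ltnS prednK // ltn_pmod.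
have ej : p + j0 = p %/ r * r + r.-1 by rewrite {1}(divn_eq p r) -addnA subnKC.
have hr1 : r.-1 < r by rewrite prednK.
have [d0 m0] := divmod_small (p %/ r) r0 hr1.
have j0lt : j0 < r by rewrite /j0; move: hr1; lia.
case: (eqVneq ((p %/ r) %% r) r.-1) => hq.
  have ej' : p + (j0 + r) = (p %/ r).+1 * r + r.-1 by rewrite addnA ej mulSn; lia.
  have [d1 m1] := divmod_small (p %/ r).+1 r0 hr1.
  apply: (@align_at_boundary _ _ (j0 + r)).
  - by move=> j' hj'; apply: H; lia.
  - by rewrite ej' m1.
  - rewrite ej' d1 -addn1 -modnDml hq addn1 prednK // modnn.
    by apply/eqP; lia.
apply: (@align_at_boundary _ _ j0).
- by move=> j' hj'; apply: H; lia.
- by rewrite ej m0.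
- by rewrite ej d0.
Qed.

(* Recognizability modulo r^L, by desubstitution: once aligned modulo r, the
   windows come from agreeing windows of X at level one lower. *)
Lemma recognize_mod_pow L P p :
  (forall j, j <= window r L -> X (P + j) = X (p + j)) -> P = p %[mod r ^ L].
Proof.
elim: L P p => [|L IH] P p H; first by rewrite expn0 !modn1.
have h1 : P = p %[mod r] by apply: recognize_mod_r => j hj; apply: H => /=; lia.
set e := (r - p %% r) %% r.
have hpe : (p + e) %% r = 0.
  by rewrite /e modnDmr -modnDml subnKC ?modnn // ltnW // ltn_pmod.
have hPe : (P + e) %% r = 0 by rewrite -modnDml h1 modnDml.
have ep : p + e = (p + e) %/ r * r by rewrite {1}(divn_eq (p + e) r) hpe addn0.
have eP : P + e = (P + e) %/ r * r by rewrite {1}(divn_eq (P + e) r) hPe addn0.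
have he : e < r by rewrite /e ltn_pmod.
have lower : forall j, j <= window r L ->
    X ((P + e) %/ r + j) = X ((p + e) %/ r + j).
  move=> j hj; rewrite -(digit_rule_mul ((P + e) %/ r + j)).
  rewrite -(digit_rule_mul ((p + e) %/ r + j)) !mulnDl -eP -ep -!addnA.
  apply: H => /=.
  have : j * r <= window r L * r by rewrite leq_mul2r hj orbT.
  by move: he; lia.
rewrite expnSr; apply/eqP; rewrite -(eqn_modDr e); apply/eqP.
by rewrite eP ep -!muln_modl (IH _ _ lower).
Qed.

(* Block additivity: the digits of q r^L + k are those of q followed by those
   of k. *)
Lemma digit_rule_block L q k : k < r ^ L ->
  X (q * r ^ L + k) + X 0 = X q + X k %[mod r].
Proof.
elim: L q k => [|L IH] q k hk.
  by move: hk; rewrite expn0 ltnS leqn0 => /eqP ->; rewrite muln1 addn0.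
have hk' : k %/ r < r ^ L by rewrite ltn_divLR // -expnSr.
have e : q * r ^ L.+1 + k = (q * r ^ L + k %/ r) * r + k %% r.
  by rewrite expnSr mulnA mulnDl -addnA -divn_eq.
have [d m] := divmod_small (q * r ^ L + k %/ r) r0 (ltn_pmod k r0).
rewrite e HX d m [X k]HX modnDml addnAC -modnDml IH // modnDml.
by rewrite [RHS]modnDmr addnA.
Qed.

Variable Y : nat -> nat.
Hypothesis Yclosure : in_orbit_closure X Y.
Hypothesis Yproximal : proximal X Y.

Lemma proximal_differences k : Y k + X 0 = Y 0 + X k %[mod r].
Proof.
have [L hk] : exists L, k < r ^ L by exists k; apply: ltn_expl.
have [n Hn] := Yproximal (ltn0Sn (window r L)).
have [q Hq] := Yclosure (n + window r L + r ^ L).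
have : q + n = 0 + n %[mod r ^ L].
  apply: recognize_mod_pow => j hj.
  by rewrite add0n -addnA -Hq ?Hn //; lia.
move/eqP; rewrite eqn_modDr mod0n => /eqP hq0.
have eq' : q = q %/ r ^ L * r ^ L by rewrite {1}(divn_eq q (r ^ L)) hq0 addn0.
have e1 : Y k = X (q %/ r ^ L * r ^ L + k) by rewrite -eq' Hq //; lia.
have e2 : Y 0 = X (q %/ r ^ L * r ^ L + 0) by rewrite -eq' Hq //; lia.
have rL : 0 < r ^ L by rewrite expn_gt0 r0.
have /eqP := digit_rule_block (q %/ r ^ L) rL.
rewrite eqn_modDr -e2 => /eqP h.
by rewrite e1 digit_rule_block // -[LHS]modnDml -h modnDml.
Qed.

(* Distality: one agreement position pins down the constant offset. *)
Lemma proximal_eq k : Y k = X k.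
Proof.
have [n0 Hn0] := Yproximal (ltnSn 0).
have h0 := proximal_differences (n0 + 0).
rewrite -Hn0 // [Y 0 + _]addnC in h0.
move/eqP: h0; rewrite eqn_modDl => /eqP h0.
have Ylt : Y k < r by have [q Hq] := Yclosure k; rewrite Hq // digit_rule_lt.
have := proximal_differences k.
rewrite -[RHS]modnDml -h0 modnDml [_ + X k]addnC => /eqP.
by rewrite eqn_modDr !modn_small ?digit_rule_lt // => /eqP.
Qed.

End DigitRule.

Lemma orbit_closure_map (g : nat -> nat) u y :
  in_orbit_closure u y -> in_orbit_closure (g \o u) (g \o y).
Proof. by move=> H N; have [n Hn] := H N; exists n => k hk /=; rewrite Hn. Qed.

Lemma proximal_map (g : nat -> nat) x y :
  proximal x y -> proximal (g \o x) (g \o y).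
Proof.
by move=> H N hN; have [n Hn] := H N hN; exists n => k hk /=; rewrite Hn.
Qed.

Theorem mainTheorem17 (r : nat) (hr : 2 <= r) (i : nat) (hi : 1 <= i <= r) :
  (exists x, is_fixed_point r x /\ x 0 = i) /\
  (forall x, is_fixed_point r x -> x 0 = i ->
     distal_in (in_orbit_closure x) x).
Proof.
split; first exact: fixed_point_exists.
move=> x Hx _ y Hy Hprox; have [Hrange _] := Hx.
have Heq := proximal_eq hr (fixed_point_digit_rule Hx)
  (orbit_closure_map predn Hy) (proximal_map predn Hprox).
apply: functional_extensionality => k.
have [q Hq] := Hy k; have := Heq k; rewrite /= Hq //.
by have := Hrange k; have := Hrange (q + k); lia.
Qed.
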